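(* Let $S\subseteq M_n$ be a noncommutative graph. Then the minimum defining $\mathcal{H}(S)$ is attained by some $m\in\mathbb{N}$ with $m\leq n^4$ and some $B\in M_m(S)$ with $\sum_{i=1}^m B_{i,i}=I_n$.
   Context: All scalars are complex; $M_n$ denotes complex $n\times n$ matrices. A noncommutative graph is a linear subspace $S\subseteq M_n$ that contains $I_n$ and is closed under conjugate transpose. For a subspace $S\subseteq M_n$, $M_m(S)$ denotes the set of $m\times m$ block matrices $B=[B_{i,j}]_{i,j\in[m]}$ with every block $B_{i,j}\in S$, viewed as elements of $M_{mn}$. The Haemers bound is $\mathcal{H}(S)=\min\{\mathrm{rk}(B):\ m\in\mathbb{N},\ B\in M_m(S),\ \sum_{i=1}^m B_{i,i}=I_n\}$. *)

(* Complex numbers are modelled as R[i] = complex R for an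
   arbitrary real closed field R (for R the reals this is the field C). *)
From HB Require Import structures.
From mathcomp Require Import all_boot all_order all_algebra.
From mathcomp Require Import complex.
Set Implicit Arguments. Unset Strict Implicit. Unset Printing Implicit Defensive.
Import Order.TTheory GRing.Theory Num.Theory.
Local Open Scope ring_scope.

Definition adjmx (R : rcfType) (n : nat) (A : 'M[R[i]]_n) : 'M[R[i]]_n :=
  (map_mx (fun z => z^*) A)^T.

Definition nc_graph (R : rcfType) (n : nat) (S : {vspace 'M[R[i]]_n}) : Prop :=
  (1%:M \in S) /\ (forall A, A \in S -> adjmx A \in S).

(* the (i,j) block (of size n x n) of an (m n) x (m n) matrix; row index
   (i,k) of the block matrix is mxvec_index i k (a bijection 'I_m*'I_n -> 'I_(m*n)) *)
Definition mxblk (K : Type) (m n : nat) (B : 'M[K]_(m * n)) (i j : 'I_m) : 'M[K]_n :=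
  \matrix_(k < n, l < n) B (mxvec_index i k) (mxvec_index j l).

Definition in_blocks (R : rcfType) (n m : nat) (S : {vspace 'M[R[i]]_n})
  (B : 'M[R[i]]_(m * n)) : Prop :=
  forall i j : 'I_m, mxblk B i j \in S.

Definition haemers_feasible (R : rcfType) (n m : nat) (S : {vspace 'M[R[i]]_n})
  (B : 'M[R[i]]_(m * n)) : Prop :=
  in_blocks S B /\ \sum_(i < m) mxblk B i i = 1%:M.

(* Since B = I_n is feasible with m = 1, an optimal B of some rank r <= n exists.
   Factor it through its column and row bases, so that its blocks are
   B_ij = U_i V_j with U_i : n x r and V_j : r x n.  Replacing the family (U_i)
   by a basis (u_l) of its span, of size a <= n r <= n^2, and (V_j) by the
   matching combinations W_l = sum_i coord_l(U_i) V_i keeps the blocks u_k W_l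
   in the span of the B_ij, keeps the diagonal sum equal to sum_i U_i V_i = I_n,
   and gives a matrix of rank at most r. *)
From HB Require Import structures.
From mathcomp Require Import all_boot all_order all_algebra.
From mathcomp Require Import complex.
From Stdlib Require Import Classical.
Set Implicit Arguments. Unset Strict Implicit. Unset Printing Implicit Defensive.
Import Order.TTheory GRing.Theory Num.Theory.
Local Open Scope ring_scope.

Lemma ex_argmin_nat (T : Type) (P : T -> Prop) (f : T -> nat) x :
  P x -> exists2 y, P y & forall z, P z -> (f y <= f z)%N.
Proof.
have [k] := ubnP (f x); elim: k x => [|k IH] x; rewrite ?ltn0 ?ltnS // => le_xk Px.
case: (classic (exists2 z, P z & (f z < f x)%N)) => [[z Pz lt_zx] | no_smaller].
  by apply: (IH z) => //; apply: leq_trans lt_zx le_xk.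
exists x => // z Pz; rewrite leqNgt; apply/negP => lt_zx; apply: no_smaller.
by exists z.
Qed.

Section BlockFactorization.

Variables (K : fieldType) (a n r : nat).

Definition mxvec_unindex (p : 'I_(a * n)) : 'I_a * 'I_n :=
  enum_val (cast_ord (esym (mxvec_cast a n)) p).

Lemma mxvec_indexK i k : mxvec_unindex (mxvec_index i k) = (i, k).
Proof. by rewrite /mxvec_unindex /mxvec_index cast_ordK enum_rankK. Qed.

Definition mxblk_rows (X : 'M[K]_(a * n, r)) (i : 'I_a) : 'M[K]_(n, r) :=
  \matrix_(k, s) X (mxvec_index i k) s.

Definition mxblk_cols (Y : 'M[K]_(r, a * n)) (j : 'I_a) : 'M[K]_(r, n) :=
  \matrix_(s, l) Y s (mxvec_index j l).

Lemma mxblk_mul (X : 'M[K]_(a * n, r)) (Y : 'M[K]_(r, a * n)) i j :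
  mxblk (X *m Y) i j = mxblk_rows X i *m mxblk_cols Y j.
Proof.
by apply/matrixP=> k l; rewrite !mxE; apply: eq_bigr => s _; rewrite !mxE.
Qed.

Definition blockmx_of (U : 'I_a -> 'M[K]_(n, r)) (W : 'I_a -> 'M[K]_(r, n)) :
    'M[K]_(a * n) :=
  let p1 p := (mxvec_unindex p).1 in let p2 p := (mxvec_unindex p).2 in
  (\matrix_(p, s) U (p1 p) (p2 p) s) *m (\matrix_(s, q) W (p1 q) s (p2 q)).

Lemma mxblk_blockmx_of U W i j : mxblk (blockmx_of U W) i j = U i *m W j.
Proof.
rewrite mxblk_mul; congr (_ *m _); apply/matrixP=> k l.
  by rewrite !mxE mxvec_indexK.
by rewrite !mxE mxvec_indexK.
Qed.

Lemma rank_blockmx_of U W : (\rank (blockmx_of U W) <= r)%N.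
Proof. exact: leq_trans (mxrankM_maxl _ _) (rank_leq_col _). Qed.

End BlockFactorization.

Lemma mxblk_base (K : fieldType) (m n : nat) (B : 'M[K]_(m * n)) i j :
  mxblk B i j = mxblk_rows (col_base B) i *m mxblk_cols (row_base B) j.
Proof. by rewrite -mxblk_mul mulmx_base. Qed.

Lemma memv_span_mktuple (K : fieldType) (vT : vectType K) m (f : 'I_m -> vT) i :
  f i \in span [tuple f i | i < m].
Proof. by apply: memv_span; apply/tnthP; exists i; rewrite tnth_mktuple. Qed.

Section SpanBasisReduction.

Variables (K : fieldType) (m n r p : nat).
Variables (U : 'I_m -> 'M[K]_(n, r)) (V : 'I_m -> 'M[K]_(r, p)).

Local Notation X := [tuple U i | i < m].
Local Notation b := (vbasis (span X)).

Definition basis_cofactor (l : 'I_(\dim (span X))) : 'M[K]_(r, p) :=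
  \sum_i coord b l (U i) *: V i.

Lemma dim_span_le : (\dim (span X) <= n * r)%N.
Proof. by rewrite (leq_trans (dimvS (subvf _))) // dimvf. Qed.

Lemma sum_basis_mul_cofactor :
  \sum_(l < \dim (span X)) b`_l *m basis_cofactor l = \sum_i U i *m V i.
Proof.
under eq_bigr => l _ do rewrite mulmx_sumr.
rewrite exchange_big; apply: eq_bigr => i _.
rewrite [in RHS](coord_vbasis (memv_span_mktuple U i)) mulmx_suml.
by apply: eq_bigr => l _; rewrite -scalemxAr -scalemxAl.
Qed.

Lemma basis_mul_cofactor_in (S : {vspace 'M[K]_(n, p)}) :
  (forall i j, U i *m V j \in S) ->
  forall k l : 'I_(\dim (span X)), b`_k *m basis_cofactor l \in S.
Proof.
move=> UVS k l.
have /coord_span -> : b`_k \in span X.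
  by apply: vbasis_mem; apply: mem_nth; rewrite size_tuple.
rewrite mulmx_suml; apply: memv_suml => j _; rewrite -scalemxAl; apply: memvZ.
rewrite mulmx_sumr; apply: memv_suml => i _; rewrite -scalemxAr; apply: memvZ.
by rewrite -(tnth_nth 0 X j) tnth_mktuple.
Qed.

End SpanBasisReduction.

Arguments basis_cofactor {K m n r p} U V l.

Section HaemersMinimizer.

Variables (R : rcfType) (n : nat) (S : {vspace 'M[R[i]]_n}).

Lemma haemers_feasible_id :
  1%:M \in S ->
  haemers_feasible S (blockmx_of (fun _ : 'I_1 => 1%:M) (fun _ => 1%:M)).
Proof.
move=> S1; split=> [i j|]; first by rewrite mxblk_blockmx_of mul1mx.
by rewrite big_ord1 mxblk_blockmx_of mul1mx.
Qed.

Lemma haemers_argmin_exists m (B : 'M[R[i]]_(m * n)) :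
  haemers_feasible S B ->
  exists m0 (B0 : 'M[R[i]]_(m0 * n)), haemers_feasible S B0 /\
    forall m' (B' : 'M[R[i]]_(m' * n)),
      haemers_feasible S B' -> (\rank B0 <= \rank B')%N.
Proof.
move=> fB; have [[m0 B0] fB0 minB0] := @ex_argmin_nat {m : nat & 'M[R[i]]_(m * n)}
  (fun B => haemers_feasible S (projT2 B)) (fun B => \rank (projT2 B))
  (existT _ m B) fB.
by exists m0, B0; split=> // m' B'; apply: (minB0 (existT _ m' B')).
Qed.

Lemma haemers_feasible_compress m (B : 'M[R[i]]_(m * n)) :
  haemers_feasible S B ->
  exists a (B' : 'M[R[i]]_(a * n)),
    [/\ (a <= n * \rank B)%N, haemers_feasible S B' & (\rank B' <= \rank B)%N].
Proof.
move=> [inB sumB].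
pose U := mxblk_rows (col_base B); pose V := mxblk_cols (row_base B).
pose u (l : 'I_(\dim (span [tuple U i | i < m]))) :=
  (vbasis (span [tuple U i | i < m]))`_l.
exists _, (blockmx_of u (basis_cofactor U V)); split.
- exact: dim_span_le.
- split=> [k l|]; rewrite ?mxblk_blockmx_of.
    by apply: basis_mul_cofactor_in => i j; rewrite -mxblk_base; apply: inB.
  under eq_bigr => l _ do rewrite mxblk_blockmx_of.
  rewrite sum_basis_mul_cofactor -sumB.
  by apply: eq_bigr => i _; rewrite mxblk_base.
- exact: rank_blockmx_of.
Qed.

End HaemersMinimizer.

Theorem mainTheorem4 (R : rcfType) (n : nat) (S : {vspace 'M[R[i]]_n}) :
  nc_graph S ->
  exists (m : nat) (B : 'M[R[i]]_(m * n)),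
    [/\ (m <= n ^ 4)%N, haemers_feasible S B &
        forall (m' : nat) (B' : 'M[R[i]]_(m' * n)),
          haemers_feasible S B' -> (\rank B <= \rank B')%N].
Proof.
move=> [S1 _].
have fI := haemers_feasible_id S1.
have [m0 [B0 [fB0 minB0]]] := haemers_argmin_exists fI.
have rkB0 : (\rank B0 <= n)%N := leq_trans (minB0 _ _ fI) (rank_blockmx_of _ _).
have [a [B [le_a fB rkB]]] := haemers_feasible_compress fB0.
exists a, B; split=> //; last first.
  by move=> m' B' fB'; apply: leq_trans rkB (minB0 _ _ fB').
have le_nn : (n * n <= n ^ 4)%N.
  by case: (posnP n) => [-> // | n_gt0]; rewrite -[(n * n)%N]/(n ^ 2)%N leq_pexp2l.
exact: leq_trans le_a (leq_trans (leq_mul (leqnn n) rkB0) le_nn).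
Qed.
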